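(* Let $p\geq 5$ be an integer and $s=\frac1p$. Let $n\geq 1$ be an integer. Then there is no integer strictly between $-2\left(n-\frac12+\frac{1}{2^{p+1}}\right)^s$ and $-2\left(n-\frac12\right)^s$. *)

From Stdlib Require Export Reals ZArith.

(* With m = -k, raising the inequalities to the p-th power gives
   2^p (n - 1/2) < m^p < 2^p (n - 1/2) + 1/2.  But 2^p (n - 1/2) is an integer,
   so the integer m^p would lie strictly between two consecutive integers. *)

From Stdlib Require Import Reals ZArith Lra Lia.
Open Scope R_scope.

Lemma Rpow_lt_compat (x y : R) (n : nat) :
  0 <= x < y -> n <> 0%nat -> x ^ n < y ^ n.
Proof.
  intros [x_ge0 x_lt_y] n_neq0.
  destruct n as [|n]; [contradiction|]; simpl.
  assert (yn_gt0 : 0 < y ^ n) by (apply pow_lt; lra).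
  apply Rle_lt_trans with (x * y ^ n).
  - apply Rmult_le_compat_l; [lra | apply pow_incr; lra].
  - apply Rmult_lt_compat_r; lra.
Qed.

Lemma Rpower_root_pow (x : R) (p : nat) :
  0 < x -> p <> 0%nat -> Rpower x (1 / INR p) ^ p = x.
Proof.
  intros x_gt0 p_neq0.
  assert (p_gt0 : 0 < INR p) by (apply lt_0_INR; lia).
  rewrite <- Rpower_pow by apply exp_pos.
  rewrite Rpower_mult.
  replace (1 / INR p * INR p) with 1 by (field; lra).
  now apply Rpower_1.
Qed.

Lemma pow_between_scaled_roots (c a b m : R) (p : nat) :
  p <> 0%nat -> 0 < c -> 0 < a -> 0 < b ->
  c * Rpower a (1 / INR p) < m < c * Rpower b (1 / INR p) ->
  c ^ p * a < m ^ p < c ^ p * b.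
Proof.
  intros p_neq0 c_gt0 a_gt0 b_gt0 [lo hi].
  assert (root_gt0 : 0 < c * Rpower a (1 / INR p))
    by (apply Rmult_lt_0_compat; [lra | apply exp_pos]).
  rewrite <- (Rpower_root_pow a p), <- (Rpower_root_pow b p), <- !Rpow_mult_distr
    by assumption.
  split; apply Rpow_lt_compat; (assumption || lra).
Qed.

Lemma pow2_mul_sub_half_integer (q n : nat) :
  exists N : Z, 2 ^ S q * (INR n - 1/2) = IZR N.
Proof.
  exists (2 ^ Z.of_nat (S q) * Z.of_nat n - 2 ^ Z.of_nat q)%Z.
  rewrite minus_IZR, mult_IZR, <- !pow_IZR, <- INR_IZR_INZ.
  simpl; field.
Qed.

Lemma IZR_not_between_succ (N m : Z) : ~ (IZR N < IZR m < IZR N + 1).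
Proof.
  intros [lo hi].
  rewrite <- plus_IZR in hi.
  apply lt_IZR in lo; apply lt_IZR in hi; lia.
Qed.

Theorem lemma3p2 (p n : nat) (hp : (5 <= p)%nat) (hn : (1 <= n)%nat) :
  ~ (exists k : Z,
       -2 * Rpower (INR n - 1/2 + 1 / 2 ^ (p + 1)) (1 / INR p) < IZR k /\
       IZR k < -2 * Rpower (INR n - 1/2) (1 / INR p)).
Proof.
  intros [k [lo hi]].
  destruct p as [|q]; [lia|].
  assert (n_ge1 : 1 <= INR n) by (apply (le_INR 1); lia).
  assert (eps_gt0 : 0 < 1 / 2 ^ (S q + 1))
    by (apply Rdiv_lt_0_compat; [lra | apply pow_lt; lra]).
  assert (scaled_eps : 2 ^ S q * (1 / 2 ^ (S q + 1)) = 1/2)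
    by (rewrite pow_add; field; apply pow_nonzero; lra).
  destruct (pow2_mul_sub_half_integer q n) as [N hN].
  assert (bounds : 2 ^ S q * (INR n - 1/2) < IZR (- k) ^ S q
                   < 2 ^ S q * (INR n - 1/2 + 1 / 2 ^ (S q + 1))).
  { apply pow_between_scaled_roots; [lia | lra | lra | lra | rewrite opp_IZR; lra]. }
  rewrite Rmult_plus_distr_l, scaled_eps, hN, pow_IZR in bounds.
  apply (IZR_not_between_succ N ((- k) ^ Z.of_nat (S q))); lra.
Qed.
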